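(* Let $\alpha \in (0,\frac{\pi}{2})$ and $\beta \in [0,\alpha]$. Then for all $\theta \in [1,\frac{\pi}{2\alpha})$, \[\Big| \frac{\sin(2\beta)}{\sin(2\alpha)} - \frac{\sin(2\theta\beta)}{\sin(2\theta\alpha)} \Big| \leq \frac{4(\theta-1)\alpha}{\sin(2\alpha)\sin(2\theta\alpha)}.\] *)

From Stdlib Require Import Reals.

From Stdlib Require Import Reals Lra.
Open Scope R_scope.

(* Over the common denominator [sin (2 alpha) sin (2 theta alpha)] the numerator is
   [sin (2 beta) (sin (2 theta alpha) - sin (2 alpha)) - sin (2 alpha) (sin (2 theta beta) - sin (2 beta))];
   as sine is bounded by 1 and 1-Lipschitz, each term is at most [2 (theta - 1) alpha]. *)

Lemma Rabs_sin_sub_le (x y : R) : Rabs (sin x - sin y) <= Rabs (x - y).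
Proof.
  destruct (MVT_abs sin cos y x) as [c [Hc _]].
  { intros c _; apply derivable_pt_lim_sin. }
  rewrite Hc; rewrite <- (Rmult_1_l (Rabs (x - y))) at 2.
  apply Rmult_le_compat_r; [apply Rabs_pos | apply Rabs_le, COS_bound].
Qed.

Lemma Rabs_sub_div_le (a b c d : R) :
  0 < c -> 0 < d ->
  Rabs (a / c - b / d) <= (Rabs a * Rabs (d - c) + Rabs c * Rabs (b - a)) / (c * d).
Proof.
  intros Hc Hd.
  assert (Hcd : 0 < / (c * d)) by (apply Rinv_0_lt_compat; nra).
  replace (a / c - b / d) with ((a * (d - c) + - (c * (b - a))) * / (c * d))
    by (field; lra).
  rewrite Rabs_mult, (Rabs_pos_eq (/ (c * d))) by lra.
  apply Rmult_le_compat_r; [lra |].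
  eapply Rle_trans; [apply Rabs_triang |].
  rewrite Rabs_Ropp, !Rabs_mult; lra.
Qed.

Lemma Rabs_sin_mul_sin_sub_le (u x y : R) :
  y <= x -> Rabs (sin u) * Rabs (sin x - sin y) <= x - y.
Proof.
  intros Hxy.
  rewrite <- (Rmult_1_l (x - y)), <- (Rabs_pos_eq (x - y)) by lra.
  apply Rmult_le_compat; try apply Rabs_pos.
  - apply Rabs_le, SIN_bound.
  - apply Rabs_sin_sub_le.
Qed.

Theorem propositionB3 (alpha beta theta : R)
  (Ha : 0 < alpha < PI / 2) (Hb : 0 <= beta <= alpha)
  (Ht : 1 <= theta < PI / (2 * alpha)) :
  Rabs (sin (2 * beta) / sin (2 * alpha)
        - sin (2 * theta * beta) / sin (2 * theta * alpha))
  <= 4 * (theta - 1) * alpha / (sin (2 * alpha) * sin (2 * theta * alpha)).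
Proof.
  assert (Hta : 2 * theta * alpha < PI).
  { assert (PI / (2 * alpha) * (2 * alpha) = PI) by (field; lra). nra. }
  assert (S1 : 0 < sin (2 * alpha)) by (apply sin_gt_0; lra).
  assert (S2 : 0 < sin (2 * theta * alpha)) by (apply sin_gt_0; nra).
  eapply Rle_trans; [apply Rabs_sub_div_le; assumption |].
  unfold Rdiv; apply Rmult_le_compat_r; [left; apply Rinv_0_lt_compat; nra |].
  pose proof (Rabs_sin_mul_sin_sub_le (2 * beta) (2 * theta * alpha) (2 * alpha)).
  pose proof (Rabs_sin_mul_sin_sub_le (2 * alpha) (2 * theta * beta) (2 * beta)).
  nra.
Qed.
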